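(* Let $\mathbf{x}$ be a probability vector for $S$ and define $W_{\rm for}=\inf\{W\in\mathbb{R}:\ \mathbf{g}\otimes(0,1)\succ_g\mathbf{x}\otimes(1,0)\text{ with respect to }H_{SW}(W)\}$. Then the infimum is attained and $$W_{\rm for}=kT\log\Big(Z_S\max_i x_ie^{\beta E_i}\Big)=kT\log\max_i\frac{x_i}{g_i}.$$
   Context: $S$ has Hamiltonian $H_S=\sum_{i=1}^nE_i|i\rangle\langle i|$, $\beta=1/(kT)>0$, $Z_S=\sum_ie^{-\beta E_i}$, Gibbs vector $g_i=e^{-\beta E_i}/Z_S$. The battery is a two-level system with Hamiltonian $W|1\rangle\langle1|$ and $H_{SW}(W)=H_S\otimes\mathbb{I}+\mathbb{I}\otimes W|1\rangle\langle1|$; $\mathbf{x}\otimes(1,0)$ denotes the product distribution with battery in $|0\rangle$, and $\mathbf{g}\otimes(0,1)$ with battery in $|1\rangle$. Thermo-majorisation for a Hamiltonian $H$ with eigenvalues $\epsilon_1,\dots,\epsilon_m$ and $Z=\sum_je^{-\beta\epsilon_j}$: for a probability vector $\mathbf{u}$ let $\pi$ order $u_{\pi(1)}e^{\beta\epsilon_{\pi(1)}}\ge\dots\ge u_{\pi(m)}e^{\beta\epsilon_{\pi(m)}}$; the curve $T(\mathbf{u})$ is the piecewise linear function on $[0,Z]$ joining the origin and $\big(\sum_{j\le k}e^{-\beta\epsilon_{\pi(j)}},\sum_{j\le k}u_{\pi(j)}\big)$, $k=1,\dots,m$; $\mathbf{u}\succ_g\mathbf{v}$ iff $T(\mathbf{u})\ge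 T(\mathbf{v})$ pointwise. *)

From Stdlib Require Import Reals Lra Lia List.
Import ListNotations.
Open Scope R_scope.

Definition rsum (n : nat) (f : nat -> R) : R :=
  fold_right Rplus 0 (map f (seq 0 n)).
(* max_{i<n} f i (meaningful for n >= 1). *)
Definition rmaxn (n : nat) (f : nat -> R) : R :=
  fold_right Rmax (f 0%nat) (map f (seq 0 n)).

Definition partfn (beta : R) (m : nat) (eps : nat -> R) : R :=
  rsum m (fun j => exp (- (beta * eps j))).

Definition is_perm (m : nat) (p : nat -> nat) : Prop :=
  (forall i, (i < m)%nat -> (p i < m)%nat) /\
  (forall i j, (i < m)%nat -> (j < m)%nat -> p i = p j -> i = j).

Definition gsort (beta : R) (m : nat) (eps u : nat -> R) (p : nat -> nat) : Prop :=
  is_perm m p /\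
  (forall j k, (j < k)%nat -> (k < m)%nat ->
     u (p k) * exp (beta * eps (p k)) <= u (p j) * exp (beta * eps (p j))).

(* Elbow points of the thermo-majorisation curve. *)
Definition Xpt (beta : R) (eps : nat -> R) (p : nat -> nat) (k : nat) : R :=
  rsum k (fun j => exp (- (beta * eps (p j)))).
Definition Ypt (u : nat -> R) (p : nat -> nat) (k : nat) : R :=
  rsum k (fun j => u (p j)).

Definition curve_val (beta : R) (m : nat) (eps u : nat -> R) (p : nat -> nat)
  (t y : R) : Prop :=
  exists k, (k < m)%nat /\
    Xpt beta eps p k <= t <= Xpt beta eps p (S k) /\
    y = Ypt u p k + (t - Xpt beta eps p k) *
        ((Ypt u p (S k) - Ypt u p k) / (Xpt beta eps p (S k) - Xpt beta eps p k)).

Definition thermo_maj (beta : R) (m : nat) (eps u v : nat -> R) : Prop :=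
  forall pu pv, gsort beta m eps u pu -> gsort beta m eps v pv ->
  forall t y1 y2, 0 <= t <= partfn beta m eps ->
    curve_val beta m eps u pu t y1 -> curve_val beta m eps v pv t y2 -> y2 <= y1.

(* Joint system S (x) battery: basis |i>|b> encoded as index i + n*b, b in {0,1}.
   Eigenvalues of H_SW(W) = H_S (x) I + I (x) W|1><1|. *)
Definition HSW (n : nat) (E : nat -> R) (W : R) (k : nat) : R :=
  if (k <? n)%nat then E k else E (k - n)%nat + W.
(* x (x) (1,0) : battery in |0>. *)
Definition tens0 (n : nat) (x : nat -> R) (k : nat) : R :=
  if (k <? n)%nat then x k else 0.
(* g (x) (0,1) : battery in |1>. *)
Definition tens1 (n : nat) (g : nat -> R) (k : nat) : R :=
  if (k <? n)%nat then 0 else g (k - n)%nat.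

Definition gibbs (beta : R) (n : nat) (E : nat -> R) (i : nat) : R :=
  exp (- (beta * E i)) / partfn beta n E.

(* The state g (x) (0,1) lives on the excited half of the battery, where its
   Gibbs-rescaled density u_k e^{beta eps_k} is the constant e^{beta W} / Z_S;
   so its thermo-majorisation curve rises with that slope up to height 1 and
   then stays flat.  Every slope of the curve of x (x) (1,0) is at most
   max_i x_i e^{beta E_i}, its first slope equals this maximum, and it also ends
   at height 1.  Hence the first curve dominates the second exactly when
   Z_S max_i x_i e^{beta E_i} <= e^{beta W}: the admissible W form a closed ray
   whose end point is W_for. *)
From Stdlib Require Import Reals Lra Lia List Permutation.
Open Scope R_scope.

Lemma rsum_S k f : rsum (S k) f = rsum k f + f k.
Proof.
  unfold rsum. rewrite seq_S, map_app, fold_right_app. simpl.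
  induction (map f (seq 0 k)) as [|a l IHl]; simpl; [ring|]. rewrite IHl. ring.
Qed.

Lemma rsum_ext k f g : (forall j, (j < k)%nat -> f j = g j) -> rsum k f = rsum k g.
Proof.
  induction k; intro H; [reflexivity|].
  rewrite !rsum_S, IHk, H; auto; intros; apply H; lia.
Qed.

Lemma rsum_le k f g : (forall j, (j < k)%nat -> f j <= g j) -> rsum k f <= rsum k g.
Proof.
  induction k; intro H; [unfold rsum; simpl; lra|]. rewrite !rsum_S.
  assert (rsum k f <= rsum k g) by (apply IHk; intros; apply H; lia).
  assert (f k <= g k) by (apply H; lia). lra.
Qed.

Lemma rsum_scal k c f : rsum k (fun j => c * f j) = c * rsum k f.
Proof. induction k; [unfold rsum; simpl; ring|]. rewrite !rsum_S, IHk. ring. Qed.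

Lemma rsum_add a b f : rsum (a + b) f = rsum a f + rsum b (fun j => f (a + j)%nat).
Proof.
  induction b; [rewrite Nat.add_0_r; change (rsum 0 (fun j => f (a + j)%nat)) with 0; ring|].
  rewrite Nat.add_succ_r, !rsum_S, IHb. ring.
Qed.

Lemma rsum_le_nonneg_tail k m f : (k <= m)%nat ->
  (forall j, (k <= j < m)%nat -> 0 <= f j) -> rsum k f <= rsum m f.
Proof.
  intros Hkm. induction m; intro H.
  - replace k with 0%nat by lia. lra.
  - destruct (Nat.eq_dec k (S m)) as [->|Hne]; [lra|].
    rewrite rsum_S. assert (rsum k f <= rsum m f) by (apply IHm; [lia|intros; apply H; lia]).
    assert (0 <= f m) by (apply H; lia). lra.
Qed.

Lemma rsum_zero_tail k m f : (k <= m)%nat ->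
  (forall j, (k <= j < m)%nat -> f j = 0) -> rsum m f = rsum k f.
Proof.
  intros Hkm. induction m; intro H.
  - replace k with 0%nat by lia. reflexivity.
  - destruct (Nat.eq_dec k (S m)) as [->|Hne]; [reflexivity|].
    rewrite rsum_S, IHm; [|lia|intros; apply H; lia]. rewrite (H m); [ring|lia].
Qed.

Lemma rsum_ge_term m f a : (a < m)%nat -> (forall j, (j < m)%nat -> 0 <= f j) ->
  f a <= rsum m f.
Proof.
  intros Ha H.
  assert (rsum (S a) f <= rsum m f) by (apply rsum_le_nonneg_tail; [lia|intros; apply H; lia]).
  assert (0 <= rsum a f) by (apply (rsum_le_nonneg_tail 0); [lia|intros; apply H; lia]).
  rewrite rsum_S in *. lra.
Qed.

Lemma rsum_pos_exists n f : 0 < rsum n f -> exists i, (i < n)%nat /\ 0 < f i.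
Proof.
  induction n as [|n IHn]; intro H; [unfold rsum in H; simpl in H; lra|].
  rewrite rsum_S in H. destruct (Rlt_le_dec 0 (f n)) as [Hf|Hf].
  - exists n. split; [lia|exact Hf].
  - destruct IHn as [i [Hi Hfi]]; [lra|]. exists i. split; [lia|exact Hfi].
Qed.

Lemma rsum_perm m p f : is_perm m p -> rsum m (fun j => f (p j)) = rsum m f.
Proof.
  intros [Hb Hi]. unfold rsum. rewrite <- (map_map p f).
  assert (Hperm : Permutation (map p (seq 0 m)) (seq 0 m)).
  { apply NoDup_Permutation; [| apply seq_NoDup |].
    - apply NoDup_map_NoDup_ForallPairs; [|apply seq_NoDup].
      intros a b Ha Hb'. apply in_seq in Ha, Hb'. apply Hi; lia.
    - assert (Hincl : incl (map p (seq 0 m)) (seq 0 m)).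
      { intros y Hy. apply in_map_iff in Hy as [a [<- Ha]]. apply in_seq in Ha.
        apply in_seq. specialize (Hb a). lia. }
      intro y; split; [apply Hincl|]. apply NoDup_length_incl; auto; [|rewrite length_map; lia].
      apply NoDup_map_NoDup_ForallPairs; [|apply seq_NoDup].
      intros a b Ha Hb'. apply in_seq in Ha, Hb'. apply Hi; lia. }
  induction (Permutation_map f Hperm); simpl; lra.
Qed.

Lemma rmaxn_ge n f i : (i < n)%nat -> f i <= rmaxn n f.
Proof.
  intro Hi. unfold rmaxn.
  assert (Hin : In (f i) (map f (seq 0 n))) by (apply in_map, in_seq; lia).
  induction (map f (seq 0 n)) as [|a l IHl]; simpl in *; [contradiction|].
  destruct Hin as [<-|Hin]; [apply Rmax_l|].
  eapply Rle_trans; [apply IHl, Hin|apply Rmax_r].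
Qed.

Lemma rmaxn_attained n f : (1 <= n)%nat -> exists a, (a < n)%nat /\ rmaxn n f = f a.
Proof.
  intro Hn. unfold rmaxn.
  assert (Hcase : fold_right Rmax (f 0%nat) (map f (seq 0 n)) = f 0%nat \/
                  In (fold_right Rmax (f 0%nat) (map f (seq 0 n))) (map f (seq 0 n))).
  { induction (map f (seq 0 n)) as [|a l IHl]; simpl; [auto|].
    destruct (Rle_dec a (fold_right Rmax (f 0%nat) l)).
    - rewrite Rmax_right by auto. destruct IHl; auto.
    - rewrite Rmax_left by lra. auto. }
  destruct Hcase as [H|H].
  - exists 0%nat. split; [lia|exact H].
  - apply in_map_iff in H as [a [Ha Hin]]. apply in_seq in Hin. exists a. split; [lia|auto].
Qed.

Lemma rmaxn_scal n c f : 0 <= c -> rmaxn n (fun i => c * f i) = c * rmaxn n f.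
Proof.
  intro Hc. unfold rmaxn. rewrite <- map_map.
  induction (map f (seq 0 n)) as [|a l IHl]; simpl; [reflexivity|]. rewrite IHl.
  destruct (Rle_dec a (fold_right Rmax (f 0%nat) l)).
  - rewrite !Rmax_right; auto. apply Rmult_le_compat_l; lra.
  - rewrite !Rmax_left; auto; [lra|]. apply Rmult_le_compat_l; lra.
Qed.

Lemma argmax_exists m (f : nat -> R) :
  exists a, (a < S m)%nat /\ forall i, (i < S m)%nat -> f i <= f a.
Proof.
  induction m as [|m [a [Ha H]]].
  - exists 0%nat. split; [lia|]. intros i Hi. replace i with 0%nat by lia. lra.
  - destruct (Rle_dec (f (S m)) (f a)).
    + exists a. split; [lia|]. intros i Hi.
      destruct (Nat.eq_dec i (S m)) as [->|]; auto. apply H; lia.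
    + exists (S m). split; [lia|]. intros i Hi.
      destruct (Nat.eq_dec i (S m)) as [->|]; [lra|]. specialize (H i ltac:(lia)). lra.
Qed.

(* Selection sort: put an argmax first, then sort the rest after swapping the
   argmax with the last index [m]. *)
Lemma sort_decreasing_exists m (f : nat -> R) : exists p, is_perm m p /\
  (forall j k, (j < k)%nat -> (k < m)%nat -> f (p k) <= f (p j)) /\
  ((0 < m)%nat -> forall i, (i < m)%nat -> f i <= f (p 0%nat)).
Proof.
  revert f. induction m as [|m IHm]; intro f.
  - exists (fun i => i). repeat split; intros; lia.
  - destruct (argmax_exists m f) as [a [Ha Hmax]].
    set (tau := fun i => if Nat.eqb i a then m else if Nat.eqb i m then a else i).
    assert (Htau_inv : forall i, tau (tau i) = i).
    { intro i. unfold tau. destruct (Nat.eqb_spec i a); destruct (Nat.eqb_spec i m);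
      repeat match goal with |- context [Nat.eqb ?x ?y] => destruct (Nat.eqb_spec x y) end; lia. }
    assert (Htau_lt : forall i, (i < S m)%nat -> (tau i < S m)%nat).
    { intros i Hi. unfold tau. destruct (Nat.eqb_spec i a); destruct (Nat.eqb_spec i m); lia. }
    assert (Htau_a : tau a = m) by (unfold tau; rewrite Nat.eqb_refl; reflexivity).
    destruct (IHm (fun i => f (tau i))) as [p [[Hpb Hpi] [Hsorted _]]].
    exists (fun j => match j with 0%nat => a | S j' => tau (p j') end).
    split; [split|split].
    + intros [|i] Hi; auto. apply Htau_lt. specialize (Hpb i ltac:(lia)). lia.
    + intros [|i] [|j] Hi Hj Heq; auto.
      * specialize (Hpb j ltac:(lia)). rewrite Heq, Htau_inv in Htau_a. lia.
      * specialize (Hpb i ltac:(lia)). rewrite <- Heq, Htau_inv in Htau_a. lia.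
      * f_equal. apply Hpi; try lia. rewrite <- (Htau_inv (p i)), <- (Htau_inv (p j)), Heq.
        reflexivity.
    + intros [|j] [|k] Hjk Hk; try lia.
      * apply Hmax, Htau_lt. specialize (Hpb k ltac:(lia)). lia.
      * apply Hsorted; lia.
    + intros _ i Hi. apply Hmax; auto.
Qed.

(* The slope of the thermo-majorisation curve on the segment of index k. *)
Definition gdensity (beta : R) (eps u : nat -> R) (k : nat) : R :=
  u k * exp (beta * eps k).

Lemma gdensity_weight beta eps u k :
  u k = gdensity beta eps u k * exp (- (beta * eps k)).
Proof.
  unfold gdensity. rewrite exp_Ropp. field. apply Rgt_not_eq, exp_pos.
Qed.

Lemma Xpt_S beta eps p k :
  Xpt beta eps p (S k) = Xpt beta eps p k + exp (- (beta * eps (p k))).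
Proof. unfold Xpt. rewrite rsum_S. reflexivity. Qed.

Lemma Ypt_S u p k : Ypt u p (S k) = Ypt u p k + u (p k).
Proof. unfold Ypt. rewrite rsum_S. reflexivity. Qed.

Lemma curve_slope beta eps u p k :
  (Ypt u p (S k) - Ypt u p k) / (Xpt beta eps p (S k) - Xpt beta eps p k)
  = gdensity beta eps u (p k).
Proof.
  rewrite Xpt_S, Ypt_S, (gdensity_weight beta eps u (p k)).
  replace (Xpt beta eps p k + exp (- (beta * eps (p k))) - Xpt beta eps p k)
    with (exp (- (beta * eps (p k)))) by ring.
  field. apply Rgt_not_eq, exp_pos.
Qed.

Lemma Ypt_le_Xpt beta eps u p k M :
  (forall j, (j < k)%nat -> gdensity beta eps u (p j) <= M) ->
  Ypt u p k <= M * Xpt beta eps p k.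
Proof.
  intro HM. unfold Ypt, Xpt. rewrite <- rsum_scal. apply rsum_le. intros j Hj.
  rewrite (gdensity_weight beta eps u (p j)).
  apply Rmult_le_compat_r; [left; apply exp_pos|auto].
Qed.

Lemma curve_val_le beta m eps v p t y M :
  is_perm m p -> (forall k, (k < m)%nat -> 0 <= v k) ->
  (forall k, (k < m)%nat -> gdensity beta eps v k <= M) ->
  curve_val beta m eps v p t y -> y <= M * t /\ y <= rsum m v.
Proof.
  intros Hp Hv HM [k [Hk [[Ht1 Ht2] Hy]]]. rewrite curve_slope in Hy.
  destruct Hp as [Hpb Hpi].
  assert (Hs0 : 0 <= gdensity beta eps v (p k)).
  { apply Rmult_le_pos; [apply Hv, Hpb; lia|left; apply exp_pos]. }
  assert (HsM : gdensity beta eps v (p k) <= M) by (apply HM, Hpb; lia).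
  split.
  - assert (Ypt v p k <= M * Xpt beta eps p k)
      by (apply Ypt_le_Xpt; intros; apply HM, Hpb; lia).
    assert ((t - Xpt beta eps p k) * gdensity beta eps v (p k) <= (t - Xpt beta eps p k) * M)
      by (apply Rmult_le_compat_l; lra).
    lra.
  - rewrite Xpt_S in Ht2.
    assert (Hseg : (t - Xpt beta eps p k) * gdensity beta eps v (p k)
                   <= exp (- (beta * eps (p k))) * gdensity beta eps v (p k))
      by (apply Rmult_le_compat_r; lra).
    rewrite (Rmult_comm (exp _)), <- gdensity_weight in Hseg.
    assert (Ypt v p (S k) <= Ypt v p m)
      by (apply rsum_le_nonneg_tail; [lia|intros; apply Hv, Hpb; lia]).
    assert (Ypt v p m = rsum m v) by (apply rsum_perm; split; auto).
    rewrite Ypt_S in *. lra.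
Qed.

Lemma curve_val_flat beta m eps u p t y M :
  0 < M -> gsort beta m eps u p ->
  (forall k, (k < m)%nat -> gdensity beta eps u k = 0 \/ gdensity beta eps u k = M) ->
  curve_val beta m eps u p t y -> y = M * t \/ y = rsum m u.
Proof.
  intros HM [[Hpb Hpi] Hsorted] H0M [k [Hk [[Ht1 Ht2] Hy]]]. rewrite curve_slope in Hy.
  destruct (H0M (p k) ltac:(apply Hpb; lia)) as [H0|H1].
  - right. rewrite H0 in Hy.
    assert (Hz : forall j, (k <= j < m)%nat -> u (p j) = 0).
    { intros j Hj. rewrite (gdensity_weight beta eps u (p j)).
      assert (gdensity beta eps u (p j) <= 0).
      { destruct (Nat.eq_dec j k) as [->|]; [lra|]. rewrite <- H0. apply Hsorted; lia. }
      destruct (H0M (p j) ltac:(apply Hpb; lia)) as [->|]; [ring|lra]. }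
    assert (Ypt u p m = Ypt u p k) by (apply rsum_zero_tail; auto; lia).
    assert (Ypt u p m = rsum m u) by (apply rsum_perm; split; auto).
    lra.
  - left.
    assert (HY : Ypt u p k = M * Xpt beta eps p k).
    { unfold Ypt, Xpt. rewrite <- rsum_scal. apply rsum_ext. intros j Hj.
      rewrite (gdensity_weight beta eps u (p j)).
      assert (M <= gdensity beta eps u (p j)) by (rewrite <- H1; apply Hsorted; lia).
      destruct (H0M (p j) ltac:(apply Hpb; lia)) as [Hj0| ->]; [lra|reflexivity]. }
    rewrite Hy, H1, HY. ring.
Qed.

Lemma thermo_maj_of_flat beta m eps u v M :
  0 < M -> (forall k, (k < m)%nat -> 0 <= v k) ->
  (forall k, (k < m)%nat -> gdensity beta eps v k <= M) ->
  (forall k, (k < m)%nat -> gdensity beta eps u k = 0 \/ gdensity beta eps u k = M) ->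
  rsum m v <= rsum m u -> thermo_maj beta m eps u v.
Proof.
  intros HM Hv HvM Hu Hmass pu pv Hpu Hpv t y1 y2 _ Cu Cv.
  destruct (curve_val_le beta m eps v pv t y2 M) as [Hlin Htot]; auto.
  { apply Hpv. }
  destruct (curve_val_flat beta m eps u pu t y1 M) as [->| ->]; auto; lra.
Qed.

(* Both curves are linear on [0, t] for t below the first elbow of each, so
   comparing them at such a t compares their first slopes. *)
Lemma thermo_maj_first_slope beta m eps u v pu pv :
  (0 < m)%nat -> thermo_maj beta m eps u v ->
  gsort beta m eps u pu -> gsort beta m eps v pv ->
  gdensity beta eps v (pv 0%nat) <= gdensity beta eps u (pu 0%nat).
Proof.
  intros Hm HT Hu Hv.
  set (t := Rmin (exp (- (beta * eps (pu 0%nat)))) (exp (- (beta * eps (pv 0%nat))))).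
  assert (Ht0 : 0 < t) by (apply Rmin_pos; apply exp_pos).
  assert (Hinit : forall w p, t <= exp (- (beta * eps (p 0%nat))) ->
      curve_val beta m eps w p t (gdensity beta eps w (p 0%nat) * t)).
  { intros w p Hle. exists 0%nat. rewrite curve_slope, Xpt_S. unfold Xpt, Ypt, rsum. simpl.
    split; [exact Hm|]. split; [lra|ring]. }
  assert (HtZ : t <= partfn beta m eps).
  { eapply Rle_trans; [apply Rmin_r|].
    apply (rsum_ge_term m (fun j => exp (- (beta * eps j)))).
    - destruct Hv as [[Hb _] _]. apply Hb, Hm.
    - intros. left. apply exp_pos. }
  apply Rmult_le_reg_r with t; auto.
  apply (HT pu pv Hu Hv t); [lra|apply Hinit, Rmin_l|apply Hinit, Rmin_r].
Qed.

Lemma thermo_maj_gdensity_le beta m eps u v pu :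
  thermo_maj beta m eps u v -> gsort beta m eps u pu ->
  forall k, (k < m)%nat -> gdensity beta eps v k <= gdensity beta eps u (pu 0%nat).
Proof.
  intros HT Hu k Hk.
  destruct (sort_decreasing_exists m (gdensity beta eps v)) as [pv [Hp [Hsorted Hmax]]].
  eapply Rle_trans; [apply Hmax; lia|].
  apply (thermo_maj_first_slope beta m eps u v pu pv); [lia|auto|auto|split; auto].
Qed.

Definition swap_halves (n j : nat) : nat :=
  if (j <? n)%nat then (j + n)%nat else (j - n)%nat.

Lemma swap_halves_perm n : is_perm (2 * n) (swap_halves n).
Proof.
  unfold swap_halves. split.
  - intros i Hi. destruct (Nat.ltb_spec i n); lia.
  - intros i j Hi Hj. destruct (Nat.ltb_spec i n); destruct (Nat.ltb_spec j n); lia.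
Qed.

Section Battery.

Variables (n : nat) (E : nat -> R) (beta : R).
Hypothesis n_pos : (1 <= n)%nat.

Lemma partfn_pos : 0 < partfn beta n E.
Proof.
  unfold partfn. apply Rlt_le_trans with (exp (- (beta * E 0%nat))); [apply exp_pos|].
  apply (rsum_ge_term n (fun j => exp (- (beta * E j)))); [lia|].
  intros. left. apply exp_pos.
Qed.

Lemma rsum_gibbs : rsum n (gibbs beta n E) = 1.
Proof.
  assert (HZ := partfn_pos).
  rewrite (rsum_ext n _ (fun j => / partfn beta n E * exp (- (beta * E j)))).
  - rewrite rsum_scal. fold (partfn beta n E). field. lra.
  - intros. unfold gibbs. field. lra.
Qed.

Lemma rsum_tens0 x : rsum (2 * n) (tens0 n x) = rsum n x.
Proof.
  replace (2 * n)%nat with (n + n)%nat by lia. rewrite rsum_add.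
  rewrite (rsum_ext n (fun j => tens0 n x (n + j)) (fun _ => 0 * 0)).
  - rewrite rsum_scal, Rmult_0_l, Rplus_0_r. apply rsum_ext. intros j Hj.
    unfold tens0. destruct (Nat.ltb_spec j n); [reflexivity|lia].
  - intros j Hj. unfold tens0. destruct (Nat.ltb_spec (n + j) n); [lia|ring].
Qed.

Lemma rsum_tens1 g : rsum (2 * n) (tens1 n g) = rsum n g.
Proof.
  replace (2 * n)%nat with (n + n)%nat by lia. rewrite rsum_add.
  rewrite (rsum_ext n (tens1 n g) (fun _ => 0 * 0)).
  - rewrite rsum_scal, Rmult_0_l, Rplus_0_l. apply rsum_ext. intros j Hj.
    unfold tens1. destruct (Nat.ltb_spec (n + j) n); [lia|]. f_equal. lia.
  - intros j Hj. unfold tens1. destruct (Nat.ltb_spec j n); [ring|lia].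
Qed.

Lemma gdensity_tens0 W x k :
  gdensity beta (HSW n E W) (tens0 n x) k
  = if (k <? n)%nat then gdensity beta E x k else 0.
Proof. unfold gdensity, tens0, HSW. destruct (k <? n)%nat; [reflexivity|ring]. Qed.

Lemma gdensity_tens1 W k :
  gdensity beta (HSW n E W) (tens1 n (gibbs beta n E)) k
  = if (k <? n)%nat then 0 else exp (beta * W) / partfn beta n E.
Proof.
  assert (HZ := partfn_pos).
  unfold gdensity, tens1, HSW, gibbs. destruct (k <? n)%nat; [ring|].
  rewrite Rmult_plus_distr_l, exp_plus, exp_Ropp. field.
  split; [lra|apply Rgt_not_eq, exp_pos].
Qed.

Lemma gsort_tens1 W :
  gsort beta (2 * n) (HSW n E W) (tens1 n (gibbs beta n E)) (swap_halves n).
Proof.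
  split; [apply swap_halves_perm|]. intros j k Hjk Hk.
  change (gdensity beta (HSW n E W) (tens1 n (gibbs beta n E)) (swap_halves n k)
          <= gdensity beta (HSW n E W) (tens1 n (gibbs beta n E)) (swap_halves n j)).
  assert (0 < exp (beta * W) / partfn beta n E)
    by (apply Rdiv_lt_0_compat; [apply exp_pos|apply partfn_pos]).
  rewrite !gdensity_tens1. unfold swap_halves.
  destruct (Nat.ltb_spec j n); destruct (Nat.ltb_spec k n);
    repeat match goal with |- context [(?a <? ?b)%nat] => destruct (Nat.ltb_spec a b) end;
    lra || lia.
Qed.

Lemma thermo_maj_battery_iff W x :
  (forall i, (i < n)%nat -> 0 <= x i) -> rsum n x = 1 ->
  thermo_maj beta (2 * n) (HSW n E W) (tens1 n (gibbs beta n E)) (tens0 n x)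
  <-> rmaxn n (gdensity beta E x) <= exp (beta * W) / partfn beta n E.
Proof.
  intros Hx Hmass.
  assert (Hc : 0 < exp (beta * W) / partfn beta n E)
    by (apply Rdiv_lt_0_compat; [apply exp_pos|apply partfn_pos]).
  split.
  - intro HT. destruct (rmaxn_attained n (gdensity beta E x) n_pos) as [a [Ha ->]].
    assert (Hle := thermo_maj_gdensity_le _ _ _ _ _ _ HT (gsort_tens1 W) a ltac:(lia)).
    rewrite gdensity_tens0, gdensity_tens1 in Hle. unfold swap_halves in Hle.
    destruct (Nat.ltb_spec a n); [|lia].
    destruct (Nat.ltb_spec 0 n); [|lia].
    destruct (Nat.ltb_spec (0 + n) n); [lia|exact Hle].
  - intro HM. apply (thermo_maj_of_flat _ _ _ _ _ (exp (beta * W) / partfn beta n E) Hc).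
    + intros k Hk. unfold tens0. destruct (Nat.ltb_spec k n); [apply Hx; auto|lra].
    + intros k Hk. rewrite gdensity_tens0. destruct (Nat.ltb_spec k n); [|lra].
      eapply Rle_trans; [apply (rmaxn_ge n); auto|exact HM].
    + intros k Hk. rewrite gdensity_tens1. destruct (k <? n)%nat; auto.
    + rewrite rsum_tens0, rsum_tens1, rsum_gibbs. lra.
Qed.

End Battery.

Lemma ln_le_iff_le_exp a b : 0 < a -> (ln a <= b <-> a <= exp b).
Proof.
  intro Ha. split; intro H.
  - rewrite <- (exp_ln a) by exact Ha.
    destruct H as [H| ->]; [left; apply exp_increasing, H|lra].
  - apply Rnot_lt_le. intro Hlt. apply exp_increasing in Hlt. rewrite exp_ln in Hlt; lra.
Qed.

Theorem mainTheorem9 (n : nat) (E : nat -> R) (beta : R) (x : nat -> R) :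
  0 < beta ->
  (forall i, (i < n)%nat -> 0 <= x i) ->
  rsum n x = 1 ->
  let Wfor := (1 / beta) *
      ln (partfn beta n E * rmaxn n (fun i => x i * exp (beta * E i))) in
  let Sset := fun W : R =>
      thermo_maj beta (2 * n) (HSW n E W) (tens1 n (gibbs beta n E)) (tens0 n x) in
  Sset Wfor /\ (forall W, Sset W -> Wfor <= W) /\
  Wfor = (1 / beta) * ln (rmaxn n (fun i => x i / gibbs beta n E i)).
Proof.
  intros Hbeta Hx Hmass Wfor Sset.
  destruct (rsum_pos_exists n x ltac:(lra)) as [i0 [Hi0 Hxi0]].
  assert (Hn : (1 <= n)%nat) by lia.
  assert (HZ := partfn_pos n E beta Hn).
  set (M := rmaxn n (gdensity beta E x)).
  assert (HZM : 0 < partfn beta n E * M).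
  { apply Rmult_lt_0_compat; [exact HZ|]. apply Rlt_le_trans with (gdensity beta E x i0).
    - apply Rmult_lt_0_compat; [exact Hxi0|apply exp_pos].
    - apply rmaxn_ge, Hi0. }
  assert (HS : forall W, Sset W <-> ln (partfn beta n E * M) <= beta * W).
  { intro W. unfold Sset. rewrite thermo_maj_battery_iff, ln_le_iff_le_exp by auto.
    fold M. split; intro H.
    - apply Rmult_le_reg_r with (/ partfn beta n E); [apply Rinv_0_lt_compat, HZ|].
      replace (partfn beta n E * M * / partfn beta n E) with M by (field; lra). exact H.
    - apply Rmult_le_reg_l with (partfn beta n E); [exact HZ|].
      replace (partfn beta n E * (exp (beta * W) / partfn beta n E)) with (exp (beta * W))
        by (field; lra). exact H. }
  split; [|split].
  - apply HS. unfold Wfor. fold (gdensity beta E x) M. right. field. lra.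
  - intros W HW. apply HS in HW. unfold Wfor. fold (gdensity beta E x) M.
    apply Rmult_le_reg_l with beta; [exact Hbeta|].
    replace (beta * (1 / beta * ln (partfn beta n E * M))) with (ln (partfn beta n E * M))
      by (field; lra). exact HW.
  - unfold Wfor. do 2 f_equal. rewrite <- rmaxn_scal by lra. unfold rmaxn. f_equal.
    + unfold gibbs. rewrite exp_Ropp. field. split; [apply Rgt_not_eq, exp_pos|lra].
    + apply map_ext. intro i. unfold gibbs. rewrite exp_Ropp. field.
      split; [apply Rgt_not_eq, exp_pos|lra].
Qed.
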